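(* Fix $\gamma>0$ and let $S_\gamma=((\mathbf{x}_i,c_i(\gamma)))_{i\in I_\gamma}$ where $I_\gamma=\{i\in\{1,\dots,k\}:c_i(0)\ne c_i(\gamma)\}$, and assume $I_\gamma\neq\emptyset$. For $\gamma'\in\{0,\gamma\}$ let $\hat\beta(\gamma')\in\Theta$ be a maximizer of $\beta\mapsto L(D_{\gamma'};\beta)$, where $D_{\gamma'}=((\mathbf{x}_i,c_i(\gamma')))_{i=1}^k$. Then $$\mu(S_\gamma;\hat\beta(\gamma))\ge\mu(S_\gamma;\hat\beta(0)).$$
   Context: Let $k\ge1$, $\varepsilon\in(0,1)$, $\delta\ge0$, examples $\mathbf{z}_i=(\mathbf{x}_i,y_i)$, $i=1,\dots,k$, with $\mathbf{x}_i\in\mathbb{R}^m$, base conformity values $A(\mathbf{z}_i)\in\mathbb{R}$, and numbers $p_i\in[0,1]$. The update function is $U^*(\mathbf{z}_i;A,\delta)=+1$ if $p_i<(1-\varepsilon)-\delta$, $-1$ if $p_i>(1-\varepsilon)+\delta$, $0$ otherwise; $A^*_\gamma(\mathbf{z}_i)=A(\mathbf{z}_i)+\gamma U^*(\mathbf{z}_i;A,\delta)$. Define $q(\gamma)$: among indices $i$ with $\sum_{j=1}^k\mathbb{I}[A^*_\gamma(\mathbf{z}_i)\ge A^*_\gamma(\mathbf{z}_j)]+1\ge\varepsilon(k+1)$, take those minimizing $A^*_\gamma(\mathbf{z}_i)$ and let $q(\gamma)$ be the smallest such index; $t(\gamma)=A^*_\gamma(\mathbf{z}_{q(\gamma)})$,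 and $c_i(\gamma)=\mathbb{I}[A^*_\gamma(\mathbf{z}_i)\ge t(\gamma)]$. Fix a parametric family of conditional distributions of a binary outcome $C\in\{0,1\}$ given $\mathbf{x}$, indexed by $\beta\in\Theta$, with $0<\mathbb{P}(C=1\mid\mathbf{x};\beta)<1$ and $\mathbb{P}(C=0\mid\mathbf{x};\beta)=1-\mathbb{P}(C=1\mid\mathbf{x};\beta)$ (e.g. logistic regression). For a finite data set $E$ of pairs $(\mathbf{x},c)$, $L(E;\beta)=\sum_{(\mathbf{x},c)\in E}\log\mathbb{P}(C=c\mid\mathbf{x};\beta)$ is the binomial log-likelihood and, for non-empty $E$, $\mu(E;\beta)=\frac{1}{|E|}\sum_{(\mathbf{x},c)\in E}\log\frac{\mathbb{P}(C=c\mid\mathbf{x};\beta)}{1-\mathbb{P}(C=c\mid\mathbf{x};\beta)}$ is the sample mean of conditional log-odds. *)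

From HB Require Import structures.
From mathcomp Require Import all_boot all_order all_algebra.
From mathcomp Require Import reals exp.
Set Implicit Arguments. Unset Strict Implicit. Unset Printing Implicit Defensive.
Import Order.TTheory GRing.Theory Num.Theory.
Local Open Scope ring_scope.

Section Defs.
Variable R : realType.
Variable k : nat.

Definition Ustar (eps delta : R) (p : 'I_k -> R) (i : 'I_k) : R :=
  if p i < (1 - eps) - delta then 1
  else if p i > (1 - eps) + delta then -1
  else 0.

Definition Astar (eps delta gamma : R) (A p : 'I_k -> R) (i : 'I_k) : R :=
  A i + gamma * Ustar eps delta p i.

Definition admissible (eps : R) (As : 'I_k -> R) (i : 'I_k) : bool :=
  eps * (k.+1)%:R <= (\sum_(j < k) ((As j <= As i)%R : bool)%:R) + 1.

Definition minimizer (eps : R) (As : 'I_k -> R) (i : 'I_k) : bool :=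
  admissible eps As i && [forall j, admissible eps As j ==> (As i <= As j)].

(* q(gamma): the smallest such index (None only if no admissible index exists,
   which cannot happen for eps < 1) *)
Definition qidx (eps : R) (As : 'I_k -> R) : option 'I_k :=
  [pick i | minimizer eps As i && [forall j, minimizer eps As j ==> (i <= j)%N]].

Definition thr (eps : R) (As : 'I_k -> R) : R :=
  if qidx eps As is Some i then As i else 0.

Definition cgam (eps delta gamma : R) (A p : 'I_k -> R) (i : 'I_k) : bool :=
  let As := Astar eps delta gamma A p in As i >= thr eps As.

Definition probC (Theta X : Type) (P1 : Theta -> X -> R) (beta : Theta) (x : X)
  (c : bool) : R := if c then P1 beta x else 1 - P1 beta x.

Definition loglik (Theta X : Type) (P1 : Theta -> X -> R) (x : 'I_k -> X)
  (c : 'I_k -> bool) (beta : Theta) : R :=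
  \sum_(i < k) ln (probC P1 beta (x i) (c i)).

Definition meanlogodds (Theta X : Type) (P1 : Theta -> X -> R) (I : {set 'I_k})
  (x : 'I_k -> X) (c : 'I_k -> bool) (beta : Theta) : R :=
  (#|I|%:R)^-1 * \sum_(i in I)
     ln (probC P1 beta (x i) (c i) / (1 - probC P1 beta (x i) (c i))).

End Defs.

From HB Require Import structures.
From mathcomp Require Import all_boot all_order all_algebra.
From mathcomp Require Import reals exp.
From mathcomp Require Import lra.
Set Implicit Arguments. Unset Strict Implicit. Unset Printing Implicit Defensive.
Import Order.TTheory GRing.Theory Num.Theory.
Local Open Scope ring_scope.

(* Let D_0 and D_g be the two labellings of the same points and
   I_g the set of indices where they disagree.  Flipping a binary label c into
   ~~ c changes its log-probability by minus the log-odds of c, hence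
     L(D_g; beta) = L(D_0; beta) + sum_{i in I_g} logodds_beta(x_i, c_i(g)),
   i.e. the sum S(beta) appearing in mu(S_g; beta) is L(D_g; beta) - L(D_0; beta).
   Since betahat_g maximizes L(D_g; .) and betahat_0 maximizes L(D_0; .),
     S(betahat_g) - S(betahat_0)
       = [L(D_g; bg) - L(D_g; b0)] + [L(D_0; b0) - L(D_0; bg)] >= 0,
   and mu is S divided by the positive constant |I_g|. *)

Section LabelFlip.
Variables (R : realType) (Theta X : Type) (P1 : Theta -> X -> R).
Hypothesis P1_open01 : forall beta xx, 0 < P1 beta xx < 1.

Definition logodds (beta : Theta) (xx : X) (c : bool) : R :=
  ln (probC P1 beta xx c / (1 - probC P1 beta xx c)).

Lemma probC_negb beta xx c : probC P1 beta xx (~~ c) = 1 - probC P1 beta xx c.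
Proof. by case: c; rewrite /probC //= opprB addrC subrK. Qed.

Lemma ln_probC_negb beta xx c :
  ln (probC P1 beta xx c) = ln (probC P1 beta xx (~~ c)) + logodds beta xx c.
Proof.
have /andP [P_gt0 P_lt1] := P1_open01 beta xx.
have q_gt0 : 0 < probC P1 beta xx c by case: (c); rewrite /probC // subr_gt0.
have q_lt1 : probC P1 beta xx c < 1.
  by case: (c); rewrite /probC // ltrBlDr ltrDl.
rewrite probC_negb /logodds ln_div ?posrE ?subr_gt0 //; lra.
Qed.

Lemma loglik_flip (k : nat) (x : 'I_k -> X) (c0 cg : 'I_k -> bool) beta :
  loglik P1 x cg beta = loglik P1 x c0 beta +
    \sum_(i in [set i | c0 i != cg i]) logodds beta (x i) (cg i).
Proof.
set I := [set i | c0 i != cg i].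
rewrite /loglik (bigID (mem I)) [X in _ = X + _](bigID (mem I)) /=.
have agree : \sum_(i < k | i \notin I) ln (probC P1 beta (x i) (cg i))
           = \sum_(i < k | i \notin I) ln (probC P1 beta (x i) (c0 i)).
  by apply: eq_bigr => i; rewrite inE negbK => /eqP ->.
have disagree : \sum_(i in I) ln (probC P1 beta (x i) (cg i))
   = \sum_(i in I) ln (probC P1 beta (x i) (c0 i))
     + \sum_(i in I) logodds beta (x i) (cg i).
  rewrite -big_split /=; apply: eq_bigr => i; rewrite inE => c0_neq_cg.
  have -> : c0 i = ~~ cg i by move: c0_neq_cg; case: (c0 i); case: (cg i).
  exact: ln_probC_negb.
rewrite agree disagree; lra.
Qed.

End LabelFlip.

(* Exchange argument: if f = g + h, b0 maximizes g and bg maximizes f, then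
   h(bg) >= h(b0), because h(bg) - h(b0) = [f bg - f b0] + [g b0 - g bg]. *)
Lemma difference_of_maximized (R : realDomainType) (T : Type) {f g h : T -> R}
  {b0 bg : T} :
  (forall b, f b = g b + h b) ->
  (forall b, g b <= g b0) -> (forall b, f b <= f bg) ->
  h b0 <= h bg.
Proof.
move=> fE g_max f_max.
have := g_max bg; have := f_max b0; rewrite !fE; lra.
Qed.

Theorem theorem2 (R : realType) (k m : nat) (eps delta gamma : R)
  (x : 'I_k -> 'rV[R]_m) (A p : 'I_k -> R)
  (Theta : Type) (P1 : Theta -> 'rV[R]_m -> R)
  (betahat0 betahatg : Theta) :
  (0 < k)%N -> 0 < eps < 1 -> 0 <= delta ->
  (forall i, 0 <= p i <= 1) ->
  (forall beta xx, 0 < P1 beta xx < 1) ->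
  0 < gamma ->
  let c0 := cgam eps delta 0 A p in
  let cg := cgam eps delta gamma A p in
  let Ig := [set i | c0 i != cg i] in
  Ig != set0 ->
  (forall beta, loglik P1 x c0 beta <= loglik P1 x c0 betahat0) ->
  (forall beta, loglik P1 x cg beta <= loglik P1 x cg betahatg) ->
  meanlogodds P1 Ig x cg betahatg >= meanlogodds P1 Ig x cg betahat0.
Proof.
move=> _ _ _ _ P1_open01 _ c0 cg Ig _ max0 maxg.
rewrite /meanlogodds ler_wpM2l ?invr_ge0 //.
have := difference_of_maximized (loglik_flip P1_open01 x c0 cg) max0 maxg.
by rewrite /Ig /logodds.
Qed.
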